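(* Let $n=2m+4$. There exists a directed cycle $\mathcal{C}$ in the hypercube graph on $\{0,1\}^n$ with the following properties: (i) $\mathcal{C}$ is simple (does not intersect itself); (ii) $\mathcal{C}$ is divided into a cyclic sequence of $M$ contiguous chunks $K_1,\dots,K_M$ of three steps each, where $M$ is even, every odd-indexed chunk consists of three upward steps and every even-indexed chunk consists of three downward steps; (iii) $M\ge 2^m$; (iv) for every $i$, the second edge $e$ of $K_i$ is parallel to the first edge $e'$ of $K_{i+1}$ (indices taken cyclically, $K_{M+1}=K_1$), and moreover $e'\succ e$ if $i$ is odd and $e'\prec e$ if $i$ is even.
   Context: Identify $\{0,1\}^n$ with subsets of $[n]$; the hypercube graph has edges $(S,S+k)$ for $k\notin S$. A step of the cycle is upward if it adds an element and downward if it removes one. Two edges $(S,S+k)$ and $(T,T+l)$ are parallel if $k=l$; for parallel edges, $(S,S+k)\prec(T,T+k)$ means $S\subsetneq T$, and $e'\succ e$ means $e\prec e'$. *)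

From mathcomp Require Import all_boot.
Set Implicit Arguments. Unset Strict Implicit. Unset Printing Implicit Defensive.

(* A closed walk in the hypercube on subsets of 'I_n is given by a sequence s
   of vertices v_0, ..., v_{L-1} (L = size s); step j goes from v_j to
   v_{j+1}, indices taken modulo L (so the last step returns to v_0). *)
Definition vtx (n : nat) (s : seq {set 'I_n}) (j : nat) : {set 'I_n} :=
  nth set0 s (j %% size s).

Definition up_step (n : nat) (s : seq {set 'I_n}) (j : nat) : Prop :=
  exists k : 'I_n, k \notin vtx s j /\ vtx s j.+1 = k |: vtx s j.

Definition down_step (n : nat) (s : seq {set 'I_n}) (j : nat) : Prop :=
  exists k : 'I_n, k \notin vtx s j.+1 /\ vtx s j = k |: vtx s j.+1.

Definition traverses (n : nat) (s : seq {set 'I_n}) (j : nat)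
    (S : {set 'I_n}) (k : 'I_n) : Prop :=
  k \notin S /\
  ((vtx s j = S /\ vtx s j.+1 = k |: S) \/ (vtx s j.+1 = S /\ vtx s j = k |: S)).

From mathcomp Require Import all_boot zify.
Set Implicit Arguments. Unset Strict Implicit. Unset Printing Implicit Defensive.

(* Reserve two coordinates a and b.  Let Z be a simple "zigzag" cycle on the
   other coordinates, i.e. one whose steps alternate up and down.  Replace its
   vertex A = Z_i by the three vertices A, a+A, a+b+A if i is even and by
   a+b+A, a+A, A if i is odd: step i of Z becomes the last step of chunk i,
   whose first two steps add (resp. remove) a and b.  The middle edge of chunk
   i and the first edge of chunk i+1 both flip b at a+Z_i and a+Z_(i+1) (i even)
   or flip a at Z_i and Z_(i+1) (i odd), and these sets are nested in the right
   direction because Z goes up at even and down at odd steps.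

   Long zigzag cycles come from doubling: if C_0, ..., C_(L-1) is a zigzag
   cycle avoiding x and y, then
     x+C_0, ..., x+C_(L-1), C_(L-1), y+C_(L-1), ..., y+C_0, x+y+C_0
   is a zigzag cycle of length 2L+2.  Doubling the 2-cycle (set0, {d}) m times
   with fresh pairs of coordinates uses 2m+1 coordinates and gives a cycle of
   length 2^(m+2) - 2 >= 2^m. *)

Lemma path_rev_sym (U : Type) (e : rel U) (a w : U) p :
  symmetric e -> path e w (rev (a :: p)) = path e a (rcons p w).
Proof.
move=> e_sym; have := rev_path e a (rcons p w).
rewrite last_rcons belast_rcons => ->.
by apply: eq_path => u v; rewrite e_sym.
Qed.

Section Adjacency.
Variable T : finType.
Implicit Types (A B : {set T}) (x y z : T) (s : seq {set T}).

Definition covers A B := [exists k, (k \notin A) && (B == k |: A)].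

Definition adj A B := covers A B || covers B A.

Lemma coversP A B : reflect (exists k, k \notin A /\ B = k |: A) (covers A B).
Proof.
by apply: (iffP existsP) => [[k /andP[kA /eqP ->]]|[k [kA ->]]]; exists k;
  rewrite ?eqxx ?andbT.
Qed.

Lemma covers_setU1 x A : x \notin A -> covers A (x |: A).
Proof. by move=> xA; apply/coversP; exists x. Qed.

Lemma card_covers A B : covers A B -> #|B| = #|A|.+1.
Proof. by case/coversP=> k [kA ->]; rewrite cardsU1 kA. Qed.

Lemma covers_proper A B : covers A B -> A \proper B.
Proof. by case/coversP=> k [kA ->]; apply: properUr; rewrite sub1set. Qed.

Lemma adj_sym : symmetric adj.
Proof. by move=> A B; rewrite /adj orbC. Qed.

Lemma adj_card A B : adj A B -> #|B| = #|A|.+1 \/ #|A| = #|B|.+1.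
Proof. by case/orP=> /card_covers; [left | right]. Qed.

Lemma adj_covers A B : adj A B -> #|B| = #|A|.+1 -> covers A B.
Proof. by case/orP=> // /card_covers ->; lia. Qed.

Lemma covers_setU1l x A B : x \notin B -> covers A B -> covers (x |: A) (x |: B).
Proof.
move=> xB /coversP[k [kA eB]]; apply/coversP; exists k; split; last by rewrite eB setUCA.
by move: xB; rewrite eB !in_setU1 !negb_or kA andbT eq_sym => /andP[].
Qed.

Lemma adj_setU1 x A B : x \notin A -> x \notin B -> adj A B -> adj (x |: A) (x |: B).
Proof.
move=> xA xB; rewrite /adj.
by case/orP=> [/(covers_setU1l xB) | /(covers_setU1l xA)] ->; rewrite ?orbT.
Qed.

(* Living on two adjacent levels and starting on the lower one forces the
   steps of the cycle to alternate up and down, see [zigzag_step]. *)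
Definition zigzag h s :=
  [&& s != [::], cycle adj s, all (fun A => h <= #|A| <= h.+1) s & #|head set0 s| == h].

Lemma adj_level h A B (b : bool) :
  adj A B -> h <= #|B| <= h.+1 -> #|A| = h + b -> #|B| = h + ~~ b.
Proof. by move=> /adj_card ? /andP[? ?]; case: b => /= ?; lia. Qed.

Section ZigzagLevels.
Variables (h : nat) (s : seq {set T}).
Hypothesis zs : zigzag h s.

Lemma zigzag_size_gt0 : 0 < size s.
Proof. by case/and4P: zs; rewrite lt0n size_eq0. Qed.

Lemma zigzag_pred_adj i : i < size s -> adj (nth set0 (last set0 s :: s) i) (nth set0 s i).
Proof. by case/and4P: zs => _ + _ _; rewrite (cycle_path set0) => /pathP; apply. Qed.

Lemma zigzag_card i : i < size s -> #|nth set0 s i| = h + odd i.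
Proof.
case/and4P: zs => _ _ /allP lev /eqP hd.
elim: i => [|i IH] lt_is; first by rewrite nth0 hd addn0.
apply: adj_level (lev _ (mem_nth _ lt_is)) (IH (ltnW lt_is)).
exact: zigzag_pred_adj lt_is.
Qed.

Lemma zigzag_even : ~~ odd (size s).
Proof.
apply/negP => odd_s; have s_gt0 := zigzag_size_gt0.
have last_card : #|last set0 s| = h + false.
  by rewrite -nth_last zigzag_card ?prednK // -subn1 oddB // odd_s.
case/and4P: zs => _ _ /allP lev _.
have := adj_level (zigzag_pred_adj s_gt0) (lev _ (mem_nth _ s_gt0)) last_card.
by rewrite zigzag_card //= addn1 addn0 => /n_Sn.
Qed.

Lemma zigzag_last_card : #|last set0 s| = h.+1.
Proof.
have s_gt0 := zigzag_size_gt0.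
rewrite -nth_last zigzag_card ?prednK // -subn1 oddB //.
by move: zigzag_even; case: odd => //= _; rewrite addn1.
Qed.
End ZigzagLevels.

Lemma mem_head_last s : s != [::] -> head set0 s \in s /\ last set0 s \in s.
Proof. by case: s => // A p _; rewrite /= mem_head mem_last. Qed.

Definition doubling x y s :=
  [seq x |: A | A <- s] ++
    last set0 s :: rcons (rev [seq y |: A | A <- s]) (x |: (y |: head set0 s)).

Lemma size_doubling x y s : size (doubling x y s) = (size s).*2.+2.
Proof. by rewrite size_cat /= size_rcons size_rev !size_map -addnn !addnS. Qed.

Lemma path_setU1 z A p :
  z \notin A -> all (fun B => z \notin B) p -> path adj A p ->
  path adj (z |: A) [seq z |: B | B <- p].
Proof.
move=> zA zp; rewrite path_map; apply: (sub_in_path (P := fun B => z \notin B)).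
  by move=> B C zB zC; exact: adj_setU1.
by rewrite /= zA.
Qed.

Lemma cycle_doubling x y A p :
  x != y -> {in A :: p, forall B, x \notin B} -> {in A :: p, forall B, y \notin B} ->
  path adj A p -> cycle adj (doubling x y (A :: p)).
Proof.
move=> xy xp yp path_p; have yx : y != x by rewrite eq_sym.
have [xA yA] : x \notin A /\ y \notin A by rewrite xp ?yp ?mem_head.
have [xl yl] : x \notin last A p /\ y \notin last A p by rewrite xp ?yp ?mem_last.
have xyA : x \notin y |: A by rewrite in_setU1 negb_or xy.
have yxA : y \notin x |: A by rewrite in_setU1 negb_or yx.
have avoid z : {in A :: p, forall B, z \notin B} -> all (fun B => z \notin B) p.
  by move=> zp; apply/allP => B pB; rewrite zp // inE pB orbT.
rewrite (cycle_path set0) /doubling /= last_cat /= last_rcons.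
rewrite cat_path /= last_map rcons_path /= path_rev_sym ?rcons_path; last exact: adj_sym.
rewrite !last_map !path_setU1 ?avoid // rev_cons last_rcons /adj.
by rewrite {1 2}[x |: (y |: A)]setUCA !covers_setU1 ?orbT.
Qed.

Lemma doubling_sub x y s (P : {set T}) :
  x \in P -> y \in P -> s != [::] -> {in s, forall A, A \subset P} ->
  {in doubling x y s, forall B, B \subset P}.
Proof.
move=> xP yP /mem_head_last[s_head s_last] sP B; rewrite mem_cat inE mem_rcons inE mem_rev.
case/or4P => [/mapP[A pA ->] | /eqP-> | /eqP-> | /mapP[A pA ->]];
  by rewrite ?subUset ?sub1set ?xP ?yP ?sP.
Qed.

Lemma uniq_map_setU1 z s :
  {in s, forall A, z \notin A} -> uniq [seq z |: A | A <- s] = uniq s.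
Proof.
move=> zs; apply: map_inj_in_uniq => A B /zs zA /zs zB eAB.
by rewrite -(setU1K zA) -(setU1K zB) eAB.
Qed.

Section Doubling.
Variables (x y : T) (h : nat) (s : seq {set T}).
Hypotheses (xy : x != y) (xs : {in s, forall A, x \notin A}).
Hypothesis ys : {in s, forall A, y \notin A}.
Hypothesis zs : zigzag h s.

Let s_nil : s != [::]. Proof. by rewrite -size_eq0 -lt0n (zigzag_size_gt0 zs). Qed.

Lemma doubling_zigzag : zigzag h.+1 (doubling x y s).
Proof.
have [head_s last_s] := mem_head_last s_nil.
have xy_head : x \notin y |: head set0 s by rewrite in_setU1 negb_or xy xs.
have card_last := zigzag_last_card zs.
case/and4P: zs => _ cyc /allP lev /eqP card_head.
apply/and4P; split.
- by rewrite -size_eq0 size_doubling.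
- case: s s_nil xs ys cyc => // A p _ xp yp; rewrite /= rcons_path => /andP[path_p _].
  exact: cycle_doubling.
- apply/allP => B; rewrite mem_cat inE mem_rcons inE mem_rev.
  case/or4P => [/mapP[A sA ->] | /eqP-> | /eqP-> | /mapP[A sA ->]].
  + by rewrite cardsU1 xs //= add1n ltnS; exact: lev.
  + by rewrite card_last leqnn ltnS leqnSn.
  + by rewrite !cardsU1 xy_head ys // card_head /=; lia.
  + by rewrite cardsU1 ys //= add1n ltnS; exact: lev.
- by case: s s_nil xs card_head => // A p _ xp /= <-; rewrite cardsU1 xp ?mem_head.
Qed.

Lemma doubling_uniq : uniq s -> uniq (doubling x y s).
Proof.
move=> us; have yx : y != x by rewrite eq_sym.
have inX B : B \in [seq x |: A | A <- s] -> (x \in B) && (y \notin B).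
  by case/mapP=> A sA ->; rewrite !in_setU1 eqxx /= negb_or yx ys.
have inY B : B \in [seq y |: A | A <- s] -> (x \notin B) && (y \in B).
  by case/mapP=> A sA ->; rewrite !in_setU1 eqxx negb_or xy xs // orbT.
have [head_s last_s] := mem_head_last s_nil.
have [x_cl y_cl] : x \notin last set0 s /\ y \notin last set0 s by rewrite xs ?ys.
have [x_top y_top] : x \in x |: (y |: head set0 s) /\ y \in x |: (y |: head set0 s).
  by rewrite !in_setU1 !eqxx orbT.
rewrite /doubling cat_uniq uniq_map_setU1 // us cons_uniq rcons_uniq rev_uniq.
rewrite uniq_map_setU1 // us mem_rcons !inE !mem_rev negb_or andbT; apply/and3P; split => //.
- apply/hasPn => B; rewrite inE mem_rcons inE mem_rev.
  case/or3P => [/eqP-> | /eqP-> | /inY/andP[xB _]]; apply/negP => /inX/andP[].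
  + by rewrite (negPf x_cl).
  + by rewrite y_top.
  + by rewrite (negPf xB).
- rewrite -andbA; apply/and3P; split.
  + by apply/eqP => eq_cl; rewrite eq_cl x_top in x_cl.
  + by apply/negP => /inY/andP[_]; rewrite (negPf y_cl).
  + by apply/negP => /inY/andP[]; rewrite x_top.
Qed.
End Doubling.
End Adjacency.

Lemma mem_vtx n (s : seq {set 'I_n}) i : 0 < size s -> vtx s i \in s.
Proof. by move=> s_gt0; rewrite /vtx mem_nth // ltn_pmod. Qed.

Section ZigzagSteps.
Variables (n h : nat) (s : seq {set 'I_n}).
Hypothesis zs : zigzag h s.

Let s_gt0 : 0 < size s := zigzag_size_gt0 zs.

Lemma zigzag_vtx_card i : #|vtx s i| = h + odd i.
Proof.
rewrite /vtx (zigzag_card zs) ?ltn_pmod // odd_mod //.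
exact/negbTE/(zigzag_even zs).
Qed.

Lemma zigzag_vtx_adj i : adj (vtx s i) (vtx s i.+1).
Proof.
have lt_i : i %% size s < size s by rewrite ltn_pmod.
rewrite /vtx -addn1 -modnDml addn1.
case: (ltngtP (i %% size s).+1 (size s)) => [lt_i1 | gt_i1 | eq_i1].
- by rewrite (modn_small lt_i1); exact: (zigzag_pred_adj zs lt_i1).
- by move: gt_i1; rewrite ltnS leqNgt lt_i.
rewrite eq_i1 modnn; have := zigzag_pred_adj zs s_gt0.
have -> : i %% size s = (size s).-1 by rewrite -[in RHS]eq_i1.
by rewrite nth_last.
Qed.

Lemma zigzag_step i : if ~~ odd i then up_step s i else down_step s i.
Proof.
have e_adj := zigzag_vtx_adj i; rewrite /up_step /down_step.
have := zigzag_vtx_card i; have := zigzag_vtx_card i.+1; rewrite /=.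
case: (odd i) => /= c1 c0.
  rewrite adj_sym in e_adj.
  by apply/coversP/(adj_covers e_adj); rewrite c0 c1 addn0 addn1.
by apply/coversP/(adj_covers e_adj); rewrite c0 c1 addn0 addn1.
Qed.
End ZigzagSteps.

Section ChunkCycle.
Variables (n h : nat) (a b : 'I_n) (Z : seq {set 'I_n}).
Hypotheses (ab : a != b) (Zzig : zigzag h Z) (Zuniq : uniq Z).
Hypotheses (aZ : {in Z, forall A : {set 'I_n}, a \notin A})
  (bZ : {in Z, forall A : {set 'I_n}, b \notin A}).

Definition stack t (A : {set 'I_n}) :=
  if t is 0 then A else if t is 1 then a |: A else a |: (b |: A).

Definition chunk_vertex i t := stack (if odd i then 2 - t else t) (vtx Z i).

Definition chunk_cycle := mkseq (fun p => chunk_vertex (p %/ 3) (p %% 3)) (3 * size Z).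

Let Z_gt0 : 0 < size Z := zigzag_size_gt0 Zzig.

Let a_vtx i : a \notin vtx Z i. Proof. exact/aZ/mem_vtx. Qed.

Let b_vtx i : b \notin vtx Z i. Proof. exact/bZ/mem_vtx. Qed.

Lemma stack_mem t (A : {set 'I_n}) : a \notin A -> b \notin A -> t < 3 ->
  (a \in stack t A) + (b \in stack t A) = t.
Proof.
move=> aA bA; have ba : b != a by rewrite eq_sym.
case: t => [|[|[|//]]] _ /=;
  by rewrite ?in_setU1 ?eqxx ?(negPf aA) ?(negPf bA) ?(negPf ba) ?orbT.
Qed.

Lemma stack_inj t u (A B : {set 'I_n}) : t < 3 -> u < 3 ->
  a \notin A -> b \notin A -> a \notin B -> b \notin B ->
  stack t A = stack u B -> t = u /\ A = B.
Proof.
move=> t3 u3 aA bA aB bB E.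
have t_u : t = u by rewrite -(stack_mem aA bA t3) -(stack_mem aB bB u3) E.
subst u; split => //; move: t3 E {u3}; case: t => [|[|[|//]]] _ /= E //.
  by rewrite -(setU1K aA) E setU1K.
have abA : a \notin b |: A by rewrite in_setU1 negb_or ab.
have abB : a \notin b |: B by rewrite in_setU1 negb_or ab.
by rewrite -(setU1K bA) -(setU1K abA) E !setU1K.
Qed.

Lemma vtx_chunk_cycle i t : t < 3 -> vtx chunk_cycle (3 * i + t) = chunk_vertex i t.
Proof.
move=> t3; have Z_even := zigzag_even Zzig.
have i_mod : i %% size Z < size Z by rewrite ltn_pmod.
have pos_lt : 3 * (i %% size Z) + t < 3 * size Z.
  rewrite (leq_trans (_ : _ < 3 * (i %% size Z) + 3)) ?ltn_add2l //.
  by rewrite -mulnSr leq_mul2l i_mod orbT.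
have pos_mod : (3 * i + t) %% (3 * size Z) = 3 * (i %% size Z) + t.
  by rewrite {1}(divn_eq i (size Z)) mulnDr mulnCA -addnA modnMDl modn_small.
rewrite /vtx size_mkseq pos_mod nth_mkseq //.
rewrite mulnC divnMDl // divn_small // addn0 modnMDl (modn_small t3).
by rewrite /chunk_vertex odd_mod ?(negPf Z_even) // /vtx modn_mod.
Qed.

Lemma chunk_vertex_inj i j t u : i < size Z -> j < size Z -> t < 3 -> u < 3 ->
  chunk_vertex i t = chunk_vertex j u -> i = j /\ t = u.
Proof.
move=> iZ jZ t3 u3 E.
have height3 k v : v < 3 -> (if odd k then 2 - v else v) < 3 by case: odd; lia.
have [e_t e_A] := stack_inj (height3 i t t3) (height3 j u u3)
  (a_vtx i) (b_vtx i) (a_vtx j) (b_vtx j) E.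
have e_ij : i = j.
  apply/eqP; rewrite -(nth_uniq set0 iZ jZ Zuniq) -{1}(modn_small iZ) -{1}(modn_small jZ).
  exact/eqP.
by subst j; split => //; move: e_t; case: odd; lia.
Qed.

Lemma chunk_cycle_uniq : uniq chunk_cycle.
Proof.
rewrite map_inj_in_uniq ?iota_uniq // => p q; rewrite !mem_iota !add0n => p_lt q_lt.
have p_div : p %/ 3 < size Z by rewrite ltn_divLR // mulnC.
have q_div : q %/ 3 < size Z by rewrite ltn_divLR // mulnC.
case/(chunk_vertex_inj p_div q_div (ltn_pmod p _) (ltn_pmod q _)) => // e_div e_mod.
by rewrite (divn_eq p 3) (divn_eq q 3) e_div e_mod.
Qed.

Lemma chunk_cycle_step i t : t < 3 ->
  if ~~ odd i then up_step chunk_cycle (3 * i + t) else down_step chunk_cycle (3 * i + t).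
Proof.
move=> t3; have ba : b != a by rewrite eq_sym.
have next : vtx chunk_cycle (3 * i + t).+1 =
    if t == 2 then chunk_vertex i.+1 0 else chunk_vertex i t.+1.
  case: t t3 => [|[|[|//]]] _; try by rewrite -addnS vtx_chunk_cycle.
  by rewrite (_ : _.+1 = 3 * i.+1 + 0) ?vtx_chunk_cycle // addn0 mulnS addnC.
rewrite /up_step /down_step vtx_chunk_cycle // next.
have := zigzag_step Zzig i; rewrite /up_step /down_step /chunk_vertex /=.
have ai := a_vtx i; have bi := b_vtx i; have ai1 := a_vtx i.+1; have bi1 := b_vtx i.+1.
case: (odd i) => /= [[k [k_i1 E]] | [k [k_i E]]]; case: t t3 {next} => [|[|[|//]]] _ /=.
- by exists b; rewrite setUCA in_setU1 negb_or ba bi.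
- by exists a.
- by exists k.
- by exists a.
- by exists b; rewrite setUCA in_setU1 negb_or ba bi.
- exists k; rewrite E [b |: (k |: _)]setUCA [a |: (k |: _)]setUCA; split => //.
  move: ai1 bi1; rewrite E !in_setU1 !negb_or => /andP[ak _] /andP[bk _].
  by rewrite k_i ![k == _]eq_sym ak bk.
Qed.

Lemma chunk_cycle_parallel i :
  exists (S T : {set 'I_n}) (k : 'I_n),
    [/\ traverses chunk_cycle (3 * i + 1) S k, traverses chunk_cycle (3 * i.+1) T k
      & if ~~ odd i then S \proper T else T \proper S].
Proof.
have ba : b != a by rewrite eq_sym.
have ai := a_vtx i; have bi := b_vtx i; have ai1 := a_vtx i.+1; have bi1 := b_vtx i.+1.
rewrite /traverses -[3 * i.+1]addn0 -!addnS !vtx_chunk_cycle // /chunk_vertex /=.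
have := zigzag_step Zzig i; rewrite /up_step /down_step.
case: (odd i) => /= [[k [k_i1 E]] | [k [k_i E]]].
- exists (vtx Z i), (vtx Z i.+1), a; split; [by split; last right | by split; last left |].
  by rewrite E; apply/covers_proper/covers_setU1.
- exists (a |: vtx Z i), (a |: vtx Z i.+1), b.
  have b_ai : b \notin a |: vtx Z i by rewrite in_setU1 negb_or ba.
  have b_ai1 : b \notin a |: vtx Z i.+1 by rewrite in_setU1 negb_or ba.
  split; [by split; last (left; rewrite setUCA) | by split; last (right; rewrite setUCA) |].
  by apply/covers_proper/covers_setU1l => //; rewrite E; apply: covers_setU1.
Qed.
End ChunkCycle.

Lemma notin_subset_leq n (A : {set 'I_n}) k (z : 'I_n) :
  A \subset [set u : 'I_n | u <= k] -> k < z -> z \notin A.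
Proof. by move/subsetP=> sub lt_kz; apply/negP => /sub; rewrite inE leqNgt lt_kz. Qed.

Section Tower.
Variables (n : nat) (c : nat -> 'I_n).
Hypothesis c_val : forall i, i < n -> c i = i :> nat.

Fixpoint tower k : seq {set 'I_n} :=
  if k is k'.+1 then doubling (c k'.*2.+1) (c k'.*2.+2) (tower k') else [:: set0; [set c 0]].

Lemma tower_spec k : k.*2 < n ->
  [/\ zigzag k (tower k), uniq (tower k), 2 ^ k <= size (tower k)
    & {in tower k, forall A : {set 'I_n}, A \subset [set z : 'I_n | z <= k.*2]}].
Proof.
elim: k => [n_gt0 | k IH lt_kn].
  have c0_neq0 : [set c 0] != set0 by apply/set0Pn; exists (c 0); rewrite inE.
  split => //.
  - by rewrite /zigzag /= cards0 cards1 /adj -[[set c 0]]setU0 covers_setU1 ?inE ?orbT.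
  - by rewrite /= inE eq_sym c0_neq0.
  - move=> A; rewrite !inE => /orP[] /eqP ->; rewrite ?sub0set //.
    by rewrite sub1set inE c_val.
have [Zzig Zuniq Zsize Zsub] := IH (ltnW (ltnW lt_kn)).
set x := c k.*2.+1; set y := c k.*2.+2.
have x_val : x = k.*2.+1 :> nat by rewrite c_val // ltnW.
have y_val : y = k.*2.+2 :> nat by rewrite c_val.
have xy : x != y by apply/eqP => /(congr1 (@nat_of_ord _)); rewrite x_val y_val; lia.
have x_avoid : {in tower k, forall A : {set 'I_n}, x \notin A}.
  by move=> A /Zsub/notin_subset_leq; apply; rewrite x_val.
have y_avoid : {in tower k, forall A : {set 'I_n}, y \notin A}.
  by move=> A /Zsub/notin_subset_leq; apply; rewrite y_val ltnW.
split.
- exact: doubling_zigzag xy x_avoid y_avoid Zzig.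
- exact: doubling_uniq xy x_avoid y_avoid Zzig Zuniq.
- by rewrite /= size_doubling expnS mul2n -!addnn; lia.
- apply: doubling_sub; rewrite ?inE ?x_val ?y_val // -/(tower k).
    by case/and4P: Zzig.
  by move=> A /Zsub/subset_trans; apply; apply/subsetP => z; rewrite !inE; lia.
Qed.
End Tower.

Theorem lemma10 (m : nat) :
  exists (M : nat) (s : seq {set 'I_(2 * m + 4)}),
    [/\ size s = 3 * M,
        uniq s,
        ~~ odd M /\ 2 ^ m <= M,
        (forall i t, i < M -> t < 3 ->
           if ~~ odd i then up_step s (3 * i + t) else down_step s (3 * i + t))
      & (forall i, i < M ->
           exists (S T : {set 'I_(2 * m + 4)}) (k : 'I_(2 * m + 4)),
             [/\ traverses s (3 * i + 1) S k,
                 traverses s (3 * i.+1) T k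
               & if ~~ odd i then S \proper T else T \proper S])].
Proof.
have n_gt0 : 0 < 2 * m + 4 by rewrite addn4.
pose c i : 'I_(2 * m + 4) := insubd (Ordinal n_gt0) i.
have c_val i : i < 2 * m + 4 -> c i = i :> nat by move=> lt_i; rewrite insubdK.
have [Zzig Zuniq Zsize Zsub] := tower_spec c_val (k := m) ltac:(by rewrite -mul2n; lia).
set Z := tower c m.
pose a := c m.*2.+1; pose b := c m.*2.+2.
have a_val : a = m.*2.+1 :> nat by rewrite c_val // -mul2n; lia.
have b_val : b = m.*2.+2 :> nat by rewrite c_val // -mul2n; lia.
have ab : a != b by apply/eqP => /(congr1 (@nat_of_ord _)); rewrite a_val b_val; lia.
have aZ : {in Z, forall A : {set 'I_(2 * m + 4)}, a \notin A}.
  by move=> A /Zsub/notin_subset_leq; apply; rewrite a_val.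
have bZ : {in Z, forall A : {set 'I_(2 * m + 4)}, b \notin A}.
  by move=> A /Zsub/notin_subset_leq; apply; rewrite b_val ltnW.
exists (size Z), (chunk_cycle a b Z); split.
- by rewrite size_mkseq.
- exact: chunk_cycle_uniq ab Zzig Zuniq aZ bZ.
- by split; [exact: zigzag_even Zzig | exact: Zsize].
- by move=> i t _; apply: (chunk_cycle_step ab Zzig aZ bZ).
- by move=> i _; apply: (chunk_cycle_parallel ab Zzig aZ bZ).
Qed.
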